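(* For $m>0$ and $n\ge 2$, the sparing number of the $(m,n)$-cone $C_{m,n}$ is $m$.
   Context: An $(m,n)$-cone $C_{m,n}$ is the graph whose vertex set is partitioned into sets $U$ and $S$, where the vertices of $U$ induce a cycle $C_m$, $S$ is an independent set with $|S|=n$, and every vertex of $S$ is adjacent to every vertex of $U$; i.e. $C_{m,n}=C_m+S$ (join). Let $\mathbb{N}_0$ be the set of non-negative integers; for $A,B\subseteq\mathbb{N}_0$, $A+B=\{a+b:a\in A,b\in B\}$. An integer additive set-indexer (IASI) of a graph $G$ is an injective map $f:V(G)\to\mathcal{P}(\mathbb{N}_0)$ such that $f^+:E(G)\to\mathcal{P}(\mathbb{N}_0)$, $f^+(uv)=f(u)+f(v)$, is injective. A weak IASI is an IASI with $|f^+(uv)|=\max(|f(u)|,|f(v)|)$ for every edge $uv$. An edge $e$ is mono-indexed if $|f^+(e)|=1$. The sparing number $\varphi(G)$ is the minimum number of mono-indexed edges over all weak IASIs of $G$. *)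

From HB Require Import structures.
From mathcomp Require Import all_boot finmap.
Set Implicit Arguments. Unset Strict Implicit. Unset Printing Implicit Defensive.
Local Open Scope fset_scope.

Definition sumset (A B : {fset nat}) : {fset nat} :=
  [fset (a + b)%N | a in A, b in B].

Section Graph.
Variables (T : finType) (e : rel T).

(* The edge set of the (simple, undirected) graph given by the symmetric
   irreflexive relation e: unordered pairs {x, y} with e x y. *)
Definition edges : {set {set T}} := [set [set x; y] | x in T, y in T & e x y].

(* Integer additive set-indexer: f injective and the induced edge labelling
   f^+(xy) = f x + f y is injective on (unordered) edges. *)
Definition is_IASI (f : T -> {fset nat}) : Prop :=
  injective f /\
  forall x y x' y', e x y -> e x' y' ->
    sumset (f x) (f y) = sumset (f x') (f y') -> [set x; y] = [set x'; y'].

Definition is_weak_IASI (f : T -> {fset nat}) : Prop :=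
  is_IASI f /\
  forall x y, e x y -> #|` sumset (f x) (f y)| = maxn #|` f x| #|` f y|.

Definition mono_edges (f : T -> {fset nat}) : {set {set T}} :=
  [set E in edges | [exists x, exists y,
     [&& e x y, E == [set x; y] & #|` sumset (f x) (f y)| == 1%N]]].

Definition is_sparing_number (k : nat) : Prop :=
  (exists f, is_weak_IASI f /\ #|mono_edges f| = k) /\
  (forall f, is_weak_IASI f -> k <= #|mono_edges f|).

End Graph.

Definition cycle_adj (m : nat) : rel 'I_m :=
  fun i j => (val j == (val i).+1 %% m) || (val i == (val j).+1 %% m).

(* The (m,n)-cone C_m + S, |S| = n: vertices inl i (cycle U) and inr s (S). *)
Definition cone_adj (m n : nat) : rel ('I_m + 'I_n)%type :=
  fun x y => match x, y with
  | inl i, inl j => cycle_adj i j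
  | inl _, inr _ => true
  | inr _, inl _ => true
  | inr _, inr _ => false
  end.

Arguments cycle_adj m : clear implicits.
Arguments cone_adj m n : clear implicits.

From mathcomp Require Import all_boot finmap zify.
Set Implicit Arguments. Unset Strict Implicit. Unset Printing Implicit Defensive.
Local Open Scope fset_scope.
Local Open Scope nat_scope.

(* Adjacent vertices of a weak IASI cannot both carry labels of size at least two, because
   |A + B| > max(|A|, |B|) for such sets. So if some rim vertex of the cone has a large label,
   every apex has a singleton label and each rim vertex is the singleton end of a
   mono-indexed spoke; otherwise all m rim edges are mono-indexed. Conversely, the labelling
   i |-> {2^i} on the rim and s |-> {(s+1) 2^m, (s+1) 2^m + 1} on the apexes is a weak IASI
   whose mono-indexed edges are exactly the rim edges. *)

Lemma sumsetP (A B : {fset nat}) k :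
  reflect (exists2 a, a \in A & exists2 b, b \in B & k = a + b) (k \in sumset A B).
Proof.
apply: (iffP (imfset2P _ _ _ _ _)) => -[a Ha [b Hb ->]];
  by exists a => //; exists b.
Qed.

Lemma sumsetC (A B : {fset nat}) : sumset A B = sumset B A.
Proof.
apply/fsetP => k; apply/sumsetP/sumsetP => -[a Ha [b Hb ->]];
  by exists b => //; exists a => //; rewrite addnC.
Qed.

Lemma sumset0 (B : {fset nat}) : sumset fset0 B = fset0.
Proof. by apply/fsetP => k; rewrite inE; apply/sumsetP => -[a]. Qed.

Lemma sumset1 a b : sumset [fset a] [fset b] = [fset a + b].
Proof.
apply/fsetP => k; apply/sumsetP/fset1P => [[_ /fset1P -> [_ /fset1P -> ->]]|->] //.
by exists a; rewrite ?inE //; exists b; rewrite ?inE.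
Qed.

Lemma sumset1_pair a b c : sumset [fset a] [fset b; c] = [fset a + b; a + c].
Proof.
apply/fsetP => k; rewrite !inE; apply/sumsetP/orP.
- by move=> [_ /fset1P -> [y]]; rewrite !inE => /orP [/eqP ->|/eqP ->] ->; [left|right].
- by move=> [/eqP ->|/eqP ->]; exists a; rewrite ?inE //;
    [exists b | exists c]; rewrite ?inE ?eqxx ?orbT.
Qed.

Lemma fset_nat_max (A : {fset nat}) :
  A != fset0 -> exists2 a, a \in A & {in A, forall x, x <= a}.
Proof.
rewrite -cardfs_gt0 cardfE => A_gt0.
have [a0 Ha0] := eq_bigmax (fun x : A => val x) A_gt0.
exists (val a0) => [|x Hx]; first exact: valP.
by rewrite -Ha0; have := @leq_bigmax _ (fun y : A => val y) (FSetSub Hx).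
Qed.

(* With [b < bmax] in [B], the sumset contains [A + b] together with [max A + bmax]. *)
Lemma card_sumset_gt (A B : {fset nat}) :
  A != fset0 -> 1 < #|` B| -> #|` A| < #|` sumset A B|.
Proof.
move=> A_n0 B_gt1.
have [amax Hamax amax_ge] := fset_nat_max A_n0.
have [bmax Hbmax bmax_ge] : exists2 b, b \in B & {in B, forall x, x <= b}.
  by apply: fset_nat_max; rewrite -cardfs_gt0 ltnW.
have /fset0Pn [b Hb] : B `\ bmax != fset0.
  by rewrite -cardfs_gt0; move: B_gt1; rewrite (cardfsD1 bmax) Hbmax.
move: Hb; rewrite !inE => /andP [b_neq HbB].
have b_lt : b < bmax by rewrite ltn_neqAle b_neq bmax_ge.
pose Ab := [fset a + b | a in A].
have card_Ab : #|` Ab| = #|` A| by rewrite card_imfset //= => x y /addIn.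
have top_notin : amax + bmax \notin Ab.
  apply/imfsetP => -[a Ha /eqP]; have := amax_ge a Ha; lia.
have sub : amax + bmax |` Ab `<=` sumset A B.
  rewrite fsubUset fsub1set; apply/andP; split.
    by apply/sumsetP; exists amax => //; exists bmax.
  by apply/fsubsetP => _ /imfsetP [a Ha ->]; apply/sumsetP; exists a => //; exists b.
by have := fsubset_leq_card sub; rewrite cardfsU1 top_notin card_Ab.
Qed.

Lemma maxn_card_lt_sumset (A B : {fset nat}) :
  1 < #|` A| -> 1 < #|` B| -> maxn #|` A| #|` B| < #|` sumset A B|.
Proof.
move=> A_gt1 B_gt1; have fset_n0 (C : {fset nat}) : 1 < #|` C| -> C != fset0.
  by move=> C_gt1; rewrite -cardfs_gt0 ltnW.
by rewrite gtn_max card_sumset_gt ?fset_n0 // sumsetC card_sumset_gt ?fset_n0.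
Qed.

Lemma set2_eq_cases (T : finType) (a b c d : T) :
  [set a; b] = [set c; d] -> (a = c /\ b = d) \/ (a = d /\ b = c).
Proof.
move=> E.
have : a \in [set c; d] by rewrite -E set21.
have : b \in [set c; d] by rewrite -E set22.
have : c \in [set a; b] by rewrite E set21.
have : d \in [set a; b] by rewrite E set22.
by move=> /set2P [] ? /set2P [] ? /set2P [] ? /set2P [] ?; subst; auto.
Qed.

Lemma leq_card_inj_set (I T : finType) (g : I -> T) (A : {set T}) :
  injective g -> (forall i, g i \in A) -> #|I| <= #|A|.
Proof.
move=> g_inj gA; rewrite -cardsT -(card_imset _ g_inj).
by apply/subset_leq_card/subsetP => _ /imsetP [i _ ->].
Qed.

Section WeakIASI.

Variables (T : finType) (e : rel T) (f : T -> {fset nat}).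
Hypothesis f_weak : is_weak_IASI e f.

Lemma edges_set2 x y : e x y -> [set x; y] \in edges e.
Proof. by move=> Hxy; apply/imset2P; exists x y; rewrite ?inE. Qed.

Lemma mono_edges_set2 x y :
  e x y -> #|` f x| = 1 -> #|` f y| = 1 -> [set x; y] \in mono_edges e f.
Proof.
move=> Hxy Hx Hy; rewrite inE edges_set2 //=.
apply/existsP; exists x; apply/existsP; exists y.
by rewrite Hxy eqxx f_weak.2 // Hx Hy.
Qed.

Hypotheses (e_irr : irreflexive e) (e_no_isolated : forall x, exists y, e x y).

(* An empty label would force the empty label on every neighbour, against injectivity. *)
Lemma weak_IASI_card_gt0 x : 0 < #|` f x|.
Proof.
have [[f_inj _] f_card] := f_weak.
rewrite cardfs_gt0; apply/negP => /eqP fx0.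
have [y Hxy] := e_no_isolated x.
have := f_card x y Hxy; rewrite fx0 sumset0 !cardfs0 max0n => /esym/cardfs0_eq fy0.
by move: Hxy; rewrite (f_inj x y) ?fx0 ?fy0 ?e_irr.
Qed.

Lemma weak_IASI_edge_card1 x y : e x y -> #|` f x| = 1 \/ #|` f y| = 1.
Proof.
move=> Hxy; have := weak_IASI_card_gt0 x; have := weak_IASI_card_gt0 y.
have := maxn_card_lt_sumset (A := f x) (B := f y); rewrite f_weak.2 //; lia.
Qed.

End WeakIASI.

Lemma ordS_val m (i : 'I_m) : val (ordS i) = if i.+1 == m then 0 else i.+1.
Proof.
rewrite /=; have := ltn_ord i; case: eqP => [->|ne_im] lt_im; first by rewrite modnn.
by rewrite modn_small //; lia.
Qed.

Lemma ordS_neq m (i : 'I_m) : 1 < m -> ordS i != i.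
Proof.
move=> m_gt1; apply/eqP => /(congr1 val); rewrite ordS_val.
by have := ltn_ord i; case: eqP => /=; lia.
Qed.

Lemma ordS2_neq m (i : 'I_m) : 2 < m -> ordS (ordS i) != i.
Proof.
move=> m_gt2; apply/eqP => /(congr1 val); rewrite !ordS_val.
by have := ltn_ord i; case: eqP; case: eqP => /=; lia.
Qed.

Lemma cycle_adj_ordS m (i : 'I_m) : cycle_adj m i (ordS i).
Proof. by rewrite /cycle_adj eqxx. Qed.

Lemma cycle_adj_cases m (i j : 'I_m) : cycle_adj m i j -> j = ordS i \/ i = ordS j.
Proof. by case/orP => /eqP E; [left|right]; apply: val_inj. Qed.

Lemma cycle_adj_irr m : 1 < m -> irreflexive (cycle_adj m).
Proof.
move=> m_gt1 i; rewrite /cycle_adj orbb; apply/negbTE.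
by have := ordS_neq i m_gt1; rewrite eq_sym -val_eqE.
Qed.

Lemma cone_adj_irr m n : 1 < m -> irreflexive (cone_adj m n).
Proof. by move=> m_gt1 [i|s] //=; apply: cycle_adj_irr. Qed.

Lemma cone_adj_no_isolated m n :
  0 < m -> 0 < n -> forall x, exists y, cone_adj m n x y.
Proof.
move=> m_gt0 n_gt0 [x|x].
- by exists (inr (Ordinal n_gt0)).
- by exists (inl (Ordinal m_gt0)).
Qed.

Definition rim_edge (m n : nat) (i : 'I_m) : {set 'I_m + 'I_n} := [set inl i; inl (ordS i)].
Arguments rim_edge {m} n i.

Lemma rim_edge_inj m n : 2 < m -> injective (@rim_edge m n).
Proof.
move=> m_gt2 i j; rewrite /rim_edge => /set2_eq_cases [[[->]]|[[ij] [ji]]] //.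
by move: (ordS2_neq j m_gt2); rewrite -ij ji eqxx.
Qed.

Section ConeLowerBound.

Variables (m n : nat) (f : 'I_m + 'I_n -> {fset nat}).
Hypotheses (m_gt2 : 2 < m) (n_gt1 : 1 < n) (f_weak : is_weak_IASI (cone_adj m n) f).

Let m_gt1 : 1 < m := ltnW m_gt2.
Let cone_no_isolated := cone_adj_no_isolated (n:=n) (ltnW m_gt1) (ltnW n_gt1).

Let f_card_gt0 : forall x, 0 < #|` f x| :=
  weak_IASI_card_gt0 f_weak (cone_adj_irr m_gt1) cone_no_isolated.

Let f_edge_card1 : forall x y, cone_adj m n x y -> #|` f x| = 1 \/ #|` f y| = 1 :=
  weak_IASI_edge_card1 f_weak (cone_adj_irr m_gt1) cone_no_isolated.

Let f_card1 x : ~~ (1 < #|` f x|) -> #|` f x| = 1.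
Proof. by rewrite -leqNgt => le1; apply/eqP; rewrite eqn_leq le1 f_card_gt0. Qed.

Lemma cone_mono_ge_rim :
  (forall i, #|` f (inl i)| = 1) -> m <= #|mono_edges (cone_adj m n) f|.
Proof.
move=> rim1; rewrite -[m in m <= _]card_ord.
apply: (leq_card_inj_set (rim_edge_inj (n:=n) m_gt2)) => i.
by apply: mono_edges_set2 => //; apply: cycle_adj_ordS.
Qed.

(* Each rim vertex [i] is the singleton end of a mono-indexed spoke: [i] itself joined to
   the apex [s0] if [f i] is a singleton, and otherwise [ordS i] joined to the apex [s1];
   the distinct apexes keep these spokes apart. *)
Lemma cone_mono_ge_spokes u :
  1 < #|` f (inl u)| -> m <= #|mono_edges (cone_adj m n) f|.
Proof.
move=> u_big.
have apex1 s : #|` f (inr s)| = 1.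
  by case: (@f_edge_card1 (inl u) (inr s) isT) => // u1; rewrite u1 in u_big.
pose big i := 1 < #|` f (inl i)|.
have succ1 i : big i -> #|` f (inl (ordS i))| = 1.
  move=> i_big; case: (@f_edge_card1 (inl i) (inl (ordS i)) (cycle_adj_ordS i)) => // i1.
  by rewrite /big i1 in i_big.
pose s0 : 'I_n := Ordinal (ltnW n_gt1); pose s1 : 'I_n := Ordinal n_gt1.
pose spoke i : {set 'I_m + 'I_n} :=
  if big i then [set inl (ordS i); inr s1] else [set inl i; inr s0].
have spoke_inj : injective spoke.
  move=> i j; rewrite /spoke.
  case: (big i); case: (big j) => /set2_eq_cases [[[ij] /eqP st]|[[] []]] //.
  by apply: ordS_inj; apply: val_inj.
rewrite -[m in m <= _]card_ord; apply: (leq_card_inj_set spoke_inj) => i.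
rewrite /spoke; case: ifP => i_big; apply: mono_edges_set2; rewrite ?apex1 ?succ1 //.
exact/f_card1/negbT.
Qed.

Lemma cone_mono_ge : m <= #|mono_edges (cone_adj m n) f|.
Proof.
case: (boolP [exists i, 1 < #|` f (inl i)|]) => [/existsP [u u_big]|].
  exact: cone_mono_ge_spokes u_big.
by rewrite negb_exists => /forallP rim_small; apply: cone_mono_ge_rim => i; apply: f_card1.
Qed.

End ConeLowerBound.

Lemma expn2_sum_inj_sorted a b c d :
  a <= b -> c <= d -> 2 ^ a + 2 ^ b = 2 ^ c + 2 ^ d -> a = c /\ b = d.
Proof.
move=> le_ab le_cd E.
have pow_le k l : k <= l -> 2 ^ k <= 2 ^ l by move=> ?; rewrite leq_exp2l.
have pow_gt0 k : 0 < 2 ^ k by rewrite expn_gt0.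
have bd : b = d.
  have := pow_le _ _ le_ab; have := pow_le _ _ le_cd; have := pow_gt0 a; have := pow_gt0 c.
  case: (ltngtP b d) => // lt_bd; have := pow_le _ _ lt_bd; rewrite expnS; lia.
by split => //; apply: (@expnI 2) => //; move: E; rewrite bd; lia.
Qed.

Lemma expn2_sum_inj a b c d :
  2 ^ a + 2 ^ b = 2 ^ c + 2 ^ d -> (a = c /\ b = d) \/ (a = d /\ b = c).
Proof.
move=> E; case: (leqP a b) => ab; case: (leqP c d) => cd.
- by left; apply: expn2_sum_inj_sorted E.
- by right; apply: expn2_sum_inj_sorted ab (ltnW cd) _; rewrite E addnC.
- by right; case: (expn2_sum_inj_sorted (ltnW ab) cd (etrans (addnC _ _) E)) => -> ->.
- left; case: (expn2_sum_inj_sorted (ltnW ab) (ltnW cd) _) => [|-> ->] //.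
  by rewrite addnC E addnC.
Qed.

Lemma fset_succ_inj x y : [fset x; x.+1] = [fset y; y.+1] -> x = y.
Proof.
move=> E; have : x \in [fset y; y.+1] by rewrite -E fset21.
have : y \in [fset x; x.+1] by rewrite E fset21.
by rewrite !inE => /orP [] /eqP yx /orP [] /eqP xy; lia.
Qed.

Lemma card_fset_succ x : #|` [fset x; x.+1]| = 2.
Proof. by rewrite cardfs2 neq_ltn ltnSn. Qed.

Lemma fset1_neq_succ a c : [fset a] <> [fset c; c.+1].
Proof. by move/(congr1 (fun A => #|` A|)); rewrite cardfs1 card_fset_succ. Qed.

Lemma divmodn_inj d q q' r r' :
  r < d -> r' < d -> q * d + r = q' * d + r' -> q = q' /\ r = r'.
Proof.
move=> lt_rd lt_r'd E.
have rr' : r = r' by move/(congr1 (modn^~ d)): E; rewrite /= !modnMDl !modn_small.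
split=> //; move: E; rewrite rr' => /addIn/eqP; rewrite eqn_pmul2r ?(leq_ltn_trans _ lt_rd) //.
by move/eqP.
Qed.

(* Rim labels are distinct powers of two, whose pairwise sums determine the pair. The apex
   labels are pairs of consecutive integers beyond all rim labels, so a spoke gets the label
   [{c, c+1}] with [c] encoding both of its ends. *)
Definition cone_label (m n : nat) (x : 'I_m + 'I_n) : {fset nat} :=
  match x with
  | inl i => [fset 2 ^ i]
  | inr s => [fset s.+1 * 2 ^ m; (s.+1 * 2 ^ m).+1]
  end.
Arguments cone_label : clear implicits.

Section ConeLabel.

Variables m n : nat.
Local Notation label := (cone_label m n).

Lemma cone_label_rim_sum (i j : 'I_m) :
  sumset (label (inl i)) (label (inl j)) = [fset 2 ^ i + 2 ^ j].
Proof. exact: sumset1. Qed.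

Lemma cone_label_spoke_sum (i : 'I_m) (s : 'I_n) :
  sumset (label (inl i)) (label (inr s)) =
  [fset s.+1 * 2 ^ m + 2 ^ i; (s.+1 * 2 ^ m + 2 ^ i).+1].
Proof. by rewrite /= sumset1_pair addnS addnC. Qed.

Lemma cone_label_spoke_sumC (i : 'I_m) (s : 'I_n) :
  sumset (label (inr s)) (label (inl i)) =
  [fset s.+1 * 2 ^ m + 2 ^ i; (s.+1 * 2 ^ m + 2 ^ i).+1].
Proof. by rewrite sumsetC cone_label_spoke_sum. Qed.

Lemma cone_label_spoke_inj (i i' : 'I_m) (s s' : 'I_n) :
  [fset s.+1 * 2 ^ m + 2 ^ i; (s.+1 * 2 ^ m + 2 ^ i).+1] =
  [fset s'.+1 * 2 ^ m + 2 ^ i'; (s'.+1 * 2 ^ m + 2 ^ i').+1] -> i = i' /\ s = s'.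
Proof.
have pow_lt (k : 'I_m) : 2 ^ k < 2 ^ m by rewrite ltn_exp2l.
move/fset_succ_inj/(divmodn_inj (pow_lt i) (pow_lt i')) => [[ss'] ii'].
by split; apply: val_inj => //; apply: (@expnI 2).
Qed.

Lemma cone_label_inj : injective label.
Proof.
move=> [i|s] [j|t] E.
- by congr inl; apply/val_inj/(@expnI 2)/fset1_inj.
- by case: (fset1_neq_succ E).
- by case: (fset1_neq_succ (esym E)).
- congr inr; apply/val_inj/succn_inj/eqP.
  by move/fset_succ_inj/eqP: E; rewrite eqn_pmul2r ?expn_gt0.
Qed.

Lemma cone_label_sum_inj x y x' y' :
  cone_adj m n x y -> cone_adj m n x' y' ->
  sumset (label x) (label y) = sumset (label x') (label y') -> [set x; y] = [set x'; y'].
Proof.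
case: x y x' y' => [i|s] [j|t] [i'|s'] [j'|t'] // _ _;
  rewrite ?cone_label_rim_sum ?cone_label_spoke_sum ?cone_label_spoke_sumC => E;
  try by [case: (fset1_neq_succ E) | case: (fset1_neq_succ (esym E))].
  by case/fset1_inj/expn2_sum_inj: E => [] [/val_inj -> /val_inj ->]; rewrite // setUC.
all: by case/cone_label_spoke_inj: E => -> ->; rewrite // setUC.
Qed.

Lemma cone_label_card_sum x y : cone_adj m n x y ->
  #|` sumset (label x) (label y)| = maxn #|` label x| #|` label y|.
Proof.
case: x y => [i|s] [j|t] // _;
by rewrite ?cone_label_rim_sum ?cone_label_spoke_sum ?cone_label_spoke_sumC /=
   ?cardfs1 ?card_fset_succ.
Qed.

Lemma cone_label_weak : is_weak_IASI (cone_adj m n) label.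
Proof.
split; last exact: cone_label_card_sum.
by split; [exact: cone_label_inj | exact: cone_label_sum_inj].
Qed.

Lemma cone_label_mono_le : #|mono_edges (cone_adj m n) label| <= m.
Proof.
apply: (@leq_trans #|rim_edge n @: [set: 'I_m]|); last first.
  by rewrite (leq_trans (leq_imset_card _ _)) // cardsT card_ord.
apply/subset_leq_card/subsetP => E; rewrite inE.
case/andP=> _ /existsP [x /existsP [y /and3P [Hxy /eqP -> mono]]].
case: x y Hxy mono => [i|s] [j|t] //=;
  rewrite ?cone_label_spoke_sum ?cone_label_spoke_sumC ?card_fset_succ //.
case/cycle_adj_cases => -> _; apply/imsetP.
  by exists i; rewrite ?inE.
by exists j; rewrite ?inE // /rim_edge setUC.
Qed.

End ConeLabel.

Theorem theorem2p27 (m n : nat) :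
  3 <= m -> 2 <= n -> is_sparing_number (cone_adj m n) m.
Proof.
move=> m_gt2 n_gt1; have label_weak := @cone_label_weak m n.
split=> [|f]; last exact: cone_mono_ge.
exists (cone_label m n); split=> //.
by apply/eqP; rewrite eqn_leq cone_label_mono_le (cone_mono_ge m_gt2 n_gt1 label_weak).
Qed.
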